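(* For every integer $r\ge 3$ and every $\varepsilon>0$, there exist a positive integer $n$ and an $n$-vertex $K_r$-free graph $G$ such that for every pair of non-adjacent vertices $u,v$, the induced subgraph $G[N(u)\cap N(v)]$ contains at least $\varepsilon n^{r-2}$ copies of $K_{r-2}$, but $G$ has no $K_r$-free homomorphic image of size smaller than $2^{\frac{1}{8r^r\varepsilon}}$ (i.e., there is no $K_r$-free graph $F$ with fewer than $2^{\frac{1}{8r^r\varepsilon}}$ vertices admitting a homomorphism $G\to F$).
   Context: A homomorphism $G\to F$ is a map $\varphi:V(G)\to V(F)$ with $\varphi(u)\varphi(v)\in E(F)$ whenever $uv\in E(G)$. *)

From HB Require Import structures.
From mathcomp Require Import all_boot all_order all_algebra.
From mathcomp Require Import reals exp.
Set Implicit Arguments. Unset Strict Implicit. Unset Printing Implicit Defensive.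
Import Order.TTheory GRing.Theory Num.Theory.

Definition sgraph (T : finType) (e : rel T) : Prop := symmetric e /\ irreflexive e.

Definition is_clique (T : finType) (e : rel T) (S : {set T}) : bool :=
  [forall x in S, forall y in S, (x != y) ==> e x y].

Definition Kfree (T : finType) (r : nat) (e : rel T) : Prop :=
  forall S : {set T}, #|S| = r -> ~~ is_clique e S.

Definition common_nbhd (T : finType) (e : rel T) (u v : T) : {set T} :=
  [set w | e u w && e v w].

Definition num_cliques (T : finType) (e : rel T) (A : {set T}) (k : nat) : nat :=
  #|[set S : {set T} | (S \subset A) && (#|S| == k) && is_clique e S]|.

Definition is_hom (T T' : finType) (e : rel T) (f : rel T') (phi : T -> T') : Prop :=
  forall u v, e u v -> f (phi u) (phi v).

From HB Require Import structures.
From mathcomp Require Import all_boot all_order all_algebra.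
From mathcomp Require Import reals exp.
From mathcomp Require Import zify lra.
Import Order.TTheory GRing.Theory Num.Theory.
Set Implicit Arguments. Unset Strict Implicit. Unset Printing Implicit Defensive.

(* Let a = 1/(8 r^r eps), k = floor a + 3 and m = r - 3 (if a <= 1 a single edge
   suffices).  The graph is a weighted blow-up of a triangle-free pattern joined to
   a clique K_m, hence K_r-free.  The pattern has vertices X_(i,s) (a coordinate i
   and a sign s), Y_s and Z_z (z a signature); its edges are X_(i,0) X_(i,1),
   Y_0 Y_1, Y_s X_(i,s) and Z_z X_(i,z(i)).  Any two non-adjacent pattern vertices
   have a common neighbour of weight at least 2^k, and each clique vertex weighs
   W = (5k + 16) 2^k, so two non-adjacent vertices of the blow-up have at least
   2^k W^(r-3) copies of K_(r-2) in their common neighbourhood, an eps-fraction of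
   n^(r-2) for n = (r - 2) W.  Among the Z's are 2^k light code vertices Z_t,
   t : 'I_k -> bool.  If t and t' differ at b, the edge X_(b,t(b)) X_(b,t'(b))
   together with K_m is a K_(r-1) each of whose vertices is adjacent to Z_t or to
   Z_t', so no homomorphism into a K_r-free graph identifies Z_t and Z_t': the
   target has at least 2^k >= 2^a vertices. *)

Lemma is_cliqueP (T : finType) (e : rel T) (S : {set T}) :
  reflect {in S &, forall x y, x != y -> e x y} (is_clique e S).
Proof.
apply: (iffP forall_inP) => [cS x y xS yS | cS x xS].
  by move/forall_inP/(_ y yS)/implyP: (cS x xS).
by apply/forall_inP => y yS; apply/implyP; apply: cS.
Qed.

Lemma is_clique_set1 (T : finType) (e : rel T) x : is_clique e [set x].
Proof. by apply/is_cliqueP => y z /set1P-> /set1P->; rewrite eqxx. Qed.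

Lemma is_clique_set2 (T : finType) (e : rel T) x y :
  e x y -> e y x -> is_clique e [set x; y].
Proof.
move=> exy eyx; apply/is_cliqueP => a b.
by rewrite !inE => /orP[] /eqP-> /orP[] /eqP->; rewrite ?eqxx.
Qed.

Lemma clique_card_lt3 (T : finType) (e : rel T) (L : {set T}) :
  (forall x y z, e x y -> e y z -> e x z -> False) ->
  is_clique e L -> (#|L| < 3)%N.
Proof.
move=> no_triangle /is_cliqueP cL; rewrite ltnNge; apply/negP => L3.
have [x xL] : exists x, x \in L by apply/set0Pn; rewrite -card_gt0 (leq_trans _ L3).
have L2 : (1 < #|L :\ x|)%N by rewrite (cardsD1 x L) xL in L3.
have [y yLx] : exists y, y \in L :\ x by apply/set0Pn; rewrite -card_gt0 ltnW.
have L1 : (0 < #|L :\ x :\ y|)%N by rewrite (cardsD1 y (L :\ x)) yLx in L2.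
have [z zLxy] : exists z, z \in L :\ x :\ y by apply/set0Pn; rewrite -card_gt0.
move: zLxy yLx; rewrite !inE => /and3P[zy zx zL] /andP[yx yL].
by apply: (no_triangle x y z); apply: cL; rewrite // eq_sym.
Qed.

Lemma Kfree_complete n r : (n < r)%N -> Kfree r (fun u v : 'I_n => u != v).
Proof. by move=> n_lt_r S cardS; have := max_card S; rewrite card_ord cardS leqNgt n_lt_r. Qed.

Section Homomorphisms.
Variables (T F : finType) (e : rel T) (f : rel F) (phi : T -> F).
Hypotheses (f_sgraph : sgraph f) (phi_hom : is_hom e f phi).

Lemma card_ge2_of_hom u v : e u v -> (2 <= #|F|)%N.
Proof.
move/phi_hom=> fuv; have phi_uv : phi u != phi v.
  by apply: contraTneq fuv => ->; rewrite f_sgraph.2.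
by have := max_card [set phi u; phi v]; rewrite cards2 phi_uv.
Qed.

Lemma hom_inj_clique S : is_clique e S -> {in S &, injective phi}.
Proof.
move=> /is_cliqueP cS x y xS yS phixy; apply/eqP; apply: contraT => xy.
by have := phi_hom (cS x y xS yS xy); rewrite phixy f_sgraph.2.
Qed.

Lemma hom_separates r u v S :
  Kfree r f -> is_clique e S -> #|S|.+1 = r ->
  {in S, forall x, e u x || e v x} -> phi u != phi v.
Proof.
move=> f_free cS cardS nbS; apply/eqP => phiuv.
have nb_u x : x \in S -> f (phi u) (phi x).
  by case/nbS/orP => /phi_hom //; rewrite phiuv.
have phiu_notin : phi u \notin phi @: S.
  by apply/imsetP => -[x xS phiux]; have := nb_u x xS; rewrite phiux f_sgraph.2.
apply: (negP (f_free (phi u |: phi @: S) _)).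
  by rewrite cardsU1 phiu_notin card_in_imset ?cardS //; exact: hom_inj_clique.
move/is_cliqueP: cS => cS.
apply/is_cliqueP => _ _ /setU1P[-> | /imsetP[x xS ->]] /setU1P[-> | /imsetP[y yS ->]].
- by rewrite eqxx.
- by move=> _; apply: nb_u.
- by move=> _; rewrite f_sgraph.1; apply: nb_u.
- by move=> phixy; apply/phi_hom/cS => //; apply: contraNneq phixy => ->.
Qed.

End Homomorphisms.

Section Pullback.
Variables (V T : finType) (adj : rel T) (lab : V -> T).

Lemma sgraph_relpre : sgraph adj -> sgraph (relpre lab adj).
Proof. by case=> adj_sym adj_irr; split=> [u v | u] /=; [apply: adj_sym | apply: adj_irr]. Qed.

Lemma is_clique_relpre S : is_clique (relpre lab adj) S -> is_clique adj (lab @: S).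
Proof.
move/is_cliqueP=> cS; apply/is_cliqueP => _ _ /imsetP[u uS ->] /imsetP[v vS ->] labuv.
by apply: cS => //; apply: contraNneq labuv => ->.
Qed.

Lemma Kfree_relpre r :
  irreflexive adj -> (forall L, is_clique adj L -> (#|L| < r)%N) ->
  Kfree r (relpre lab adj).
Proof.
move=> adj_irr small_cliques S cardS; apply/negP => cS.
have lab_inj : {in S &, injective lab}.
  move=> u v uS vS labuv; apply/eqP; apply: contraT => uv.
  by have /is_cliqueP/(_ u v uS vS uv) := cS; rewrite /= labuv adj_irr.
by have := small_cliques _ (is_clique_relpre cS); rewrite card_in_imset // cardS ltnn.
Qed.

Lemma is_hom_relpre_section (F : finType) (f : rel F) (phi : V -> F) (sec : T -> V) :
  cancel sec lab -> is_hom (relpre lab adj) f phi -> is_hom adj f (phi \o sec).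
Proof. by move=> secK phi_hom x y xy; apply: phi_hom; rewrite /= !secK. Qed.

(* Picking one vertex in the fibre of each x in L gives a clique of the blow-up,
   and distinct picks give distinct cliques. *)
Lemma prod_card_fibres_le_num_cliques (A : {set V}) (L : {set T}) :
  is_clique adj L -> (forall v, lab v \in L -> v \in A) ->
  (\prod_(x in L) #|[set v | lab v == x]| <= num_cliques (relpre lab adj) A #|L|)%N.
Proof.
move=> /is_cliqueP cL labA.
pose F (i : 'I_#|L|) := [pred v | lab v == enum_val i].
have labF g : g \in family F -> forall i, lab (g i) = enum_val i.
  by move=> /familyP gF i; apply/eqP/gF.
have gF_inj g : g \in family F -> injective g.
  by move=> gF i j /(congr1 lab); rewrite !labF // => /enum_val_inj.
pose image (g : {ffun 'I_#|L| -> V}) := [set g i | i : 'I_#|L|].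
have image_inj : {in family F &, injective image}.
  move=> g1 g2 g1F g2F eq_image; apply/ffunP => i.
  have /imsetP[j _ g1ij] : g1 i \in image g2 by rewrite -eq_image imset_f.
  by have := congr1 lab g1ij; rewrite !labF // => /enum_val_inj ij; rewrite g1ij ij.
rewrite big_enum_val /= (eq_bigr (fun i => #|F i|)) => [|i _]; last by rewrite cardsE.
have -> : (\prod_(i < #|L|) #|F i| = #|family F|)%N.
  by rewrite card_family foldrE big_map big_enum.
rewrite -(card_in_imset image_inj); apply: subset_leq_card.
apply/subsetP => _ /imsetP[g gF ->]; rewrite inE -andbA; apply/and3P; split.
- by apply/subsetP => _ /imsetP[i _ ->]; apply: labA; rewrite labF // enum_valP.
- by rewrite card_imset ?card_ord //; apply: gF_inj.
apply/is_cliqueP => _ _ /imsetP[i _ ->] /imsetP[j _ ->] gij.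
rewrite /= !labF //; apply: cL; rewrite ?enum_valP //.
by apply: contraNneq gij => /enum_val_inj ->.
Qed.

End Pullback.

Section Blowup.
Variables (T : finType) (w : T -> nat).

Definition blowup_seq := flatten [seq nseq (w x) x | x <- enum T].

Definition blowup_label (v : 'I_(size blowup_seq)) : T := tnth (in_tuple blowup_seq) v.

Lemma size_blowup_seq : size blowup_seq = (\sum_x w x)%N.
Proof.
rewrite size_flatten /shape -map_comp sumnE big_map big_enum /=.
by apply: eq_bigr => x _; rewrite /= size_nseq.
Qed.

Lemma card_blowup_fibre x : #|[set v | blowup_label v == x]| = w x.
Proof.
have -> : #|[set v | blowup_label v == x]| = count_mem x blowup_seq.
  rewrite cardsE cardE size_filter -[in RHS](mkseq_nth x blowup_seq).
  rewrite /mkseq -val_enum_ord -map_comp count_map -enumT.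
  by apply: eq_count => v; exact: (congr1 (eq_op^~ x) (tnth_nth x _ v)).
rewrite count_flatten -map_comp sumnE big_map big_enum /= (bigD1 x) //=.
rewrite count_nseq /= eqxx mul1n big1 ?addn0 // => y yx.
by rewrite count_nseq /= (negbTE yx).
Qed.

Lemma blowup_label_section :
  (forall x, 0 < w x)%N -> exists sec, cancel sec blowup_label.
Proof.
move=> w_gt0.
have fibre_inhabited x : exists v, blowup_label v == x.
  by have /card_gt0P[v] : (0 < #|[set v | blowup_label v == x]|)%N;
    [rewrite card_blowup_fibre | rewrite inE; exists v].
by exists (fun x => xchoose (fibre_inhabited x)) => x; apply/eqP/(xchooseP (fibre_inhabited x)).
Qed.

End Blowup.

Arguments blowup_label {T} w v.

Section CliqueJoin.
Variables (T : finType) (adj : rel T) (m : nat).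

Definition join_clique : rel (T + 'I_m) := fun p q =>
  match p, q with
  | inl x, inl y => adj x y
  | inr i, inr j => i != j
  | _, _ => true
  end.

Lemma sgraph_join_clique : sgraph adj -> sgraph join_clique.
Proof.
case=> adj_sym adj_irr.
by split=> [[x|i] [y|j] | [x|i]] //=; rewrite ?eqxx // eq_sym.
Qed.

Lemma card_join_clique_lt c L :
  (forall B, is_clique adj B -> (#|B| < c)%N) ->
  is_clique join_clique L -> (#|L| < c + m)%N.
Proof.
move=> small_cliques /is_cliqueP cL.
have -> : #|L| = (#|[set x | inl x \in L]| + #|[set j | inr j \in L]|)%N.
  by rewrite -!sum1_card big_sumType; congr (_ + _)%N; apply: eq_bigl => ?; rewrite inE.
rewrite -addSn leq_add //; last by rewrite (leq_trans (max_card _)) ?card_ord.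
apply/small_cliques/is_cliqueP => x y; rewrite !inE => xL yL xy.
by apply: (cL (inl x) (inl y)); rewrite // inj_eq.
Qed.

Implicit Types (B : {set T}) (J : {set 'I_m}).

Definition join_set B J : {set T + 'I_m} :=
  inl @: B :|: inr @: J.

Lemma disjoint_join_set B J : [disjoint inl @: B & inr @: J].
Proof.
apply/pred0P => -[x|j] /=; apply/andP => -[] /imsetP[? _ //] _ /imsetP[? _ //].
Qed.

Lemma card_join_set B J : #|join_set B J| = (#|B| + #|J|)%N.
Proof.
rewrite -(card_imset B (@inl_inj T 'I_m)) -(card_imset J (@inr_inj T 'I_m)).
by apply/eqP; rewrite (leq_card_setU _ _).2 disjoint_join_set.
Qed.

Lemma is_clique_join_set B J : is_clique adj B -> is_clique join_clique (join_set B J).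
Proof.
move=> /is_cliqueP cB; apply/is_cliqueP.
move=> _ _ /setUP[|] /imsetP[x xB ->] /setUP[|] /imsetP[y yB ->] //= xy.
by apply: cB; rewrite // -(inj_eq inl_inj).
Qed.

Lemma join_set_sub_common_nbhd B J p q :
  {in B, forall x, join_clique p (inl x) && join_clique q (inl x)} ->
  {in J, forall j, join_clique p (inr j) && join_clique q (inr j)} ->
  join_set B J \subset common_nbhd join_clique p q.
Proof.
move=> nbB nbJ; apply/subsetP => _ /setUP[|] /imsetP[z zBJ ->]; rewrite inE.
- exact: nbB.
- exact: nbJ.
Qed.

Variables (w : T -> nat) (W : nat).

Definition join_weight (p : T + 'I_m) : nat :=
  match p with inl x => w x | inr _ => W end.

Lemma prod_join_weight B J :
  (\prod_(p in join_set B J) join_weight p = \prod_(x in B) w x * W ^ #|J|)%N.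
Proof.
rewrite (eq_bigl [predU inl @: B & inr @: J]); last by move=> p; rewrite !inE.
rewrite bigU ?disjoint_join_set // !big_imset /= ?prod_nat_const //.
- by move=> ? ? _ _ [].
- by move=> ? ? _ _ [].
Qed.

Lemma join_clique_codegree M a b :
  sgraph adj -> adj a b -> (M * W <= w a * w b)%N ->
  (forall x y, ~~ adj x y -> exists2 z, adj x z && adj y z & (M <= w z)%N) ->
  forall p q, ~~ join_clique p q -> exists L, [/\ is_clique join_clique L,
    L \subset common_nbhd join_clique p q, #|L| = m.+1 &
    (M * W ^ m <= \prod_(s in L) join_weight s)%N].
Proof.
move=> [adj_sym adj_irr] ab heavy_ab common [x|i] [y|i'] //= pq.
- have [z /andP[xz yz] heavy_z] := common x y pq.
  exists (join_set [set z] setT); split.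
  + exact/is_clique_join_set/is_clique_set1.
  + by apply: join_set_sub_common_nbhd => [_ /set1P->|]; [apply/andP | ].
  + by rewrite card_join_set cards1 cardsT card_ord.
  + by rewrite prod_join_weight big_set1 cardsT card_ord leq_mul2r heavy_z orbT.
- move: pq; rewrite negbK => /eqP<-{i'}.
  have m_gt0 : (0 < m)%N := leq_ltn_trans (leq0n i) (ltn_ord i).
  have ab_neq : a != b by apply: contraTneq ab => ->; rewrite adj_irr.
  exists (join_set [set a; b] [set~ i]); split.
  + by apply/is_clique_join_set/is_clique_set2; rewrite // adj_sym.
  + by apply: join_set_sub_common_nbhd => // j; rewrite !inE /= eq_sym => ->.
  + by rewrite card_join_set cards2 ab_neq cardsC1 card_ord add2n prednK.
  + rewrite prod_join_weight big_setU1 ?inE // big_set1 cardsC1 card_ord.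
    by rewrite -{1}(prednK m_gt0) expnS !mulnA leq_mul2r heavy_ab orbT.
Qed.

Lemma join_hom_separates (F : finType) (f : rel F) (phi : T + 'I_m -> F) x y a b :
  sgraph adj -> sgraph f -> Kfree m.+3 f -> is_hom join_clique f phi ->
  adj a b -> adj x a -> adj y b -> phi (inl x) != phi (inl y).
Proof.
move=> [adj_sym adj_irr] f_sgraph f_free phi_hom ab xa yb.
have ab_neq : a != b by apply: contraTneq ab => ->; rewrite adj_irr.
apply: (hom_separates f_sgraph phi_hom f_free (S := join_set [set a; b] setT)).
- by apply/is_clique_join_set/is_clique_set2; rewrite // adj_sym.
- by rewrite card_join_set cards2 ab_neq cardsT card_ord.
- by move=> _ /setUP[] /imsetP[z zab ->] //=; case/set2P: zab => ->; rewrite ?xa ?yb ?orbT.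
Qed.

End CliqueJoin.

Arguments join_clique {T} adj m.

Lemma exists_notin_image (A B : finType) (f : A -> B) (s : seq B) :
  injective f -> (size s < #|A|)%N -> exists a, f a \notin s.
Proof.
move=> f_inj small_s; apply/existsP; apply: contraLR small_s => /existsPn all_in.
rewrite -leqNgt -(card_imset _ f_inj) (leq_trans _ (card_size s)) //.
by apply/subset_leq_card/subsetP => _ /imsetP[a _ ->]; rewrite -[_ \in _]negbK all_in.
Qed.

Section Pattern.
Variable k : nat.

Definition coordinate := ('I_3 + 'I_k)%type.
Definition signature := ({ffun 'I_k -> bool} + coordinate)%type.

(* On the three fixed coordinates 'I_3 a signature is negative only at
   [neg_coordinate z]: every signature takes both values, and any two signatures
   are positive at a common coordinate. *)
Definition neg_coordinate (z : signature) : coordinate :=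
  match z with inl _ => inl ord_max | inr j => j end.

Definition sign (z : signature) (i : coordinate) : bool :=
  match z, i with
  | inl t, inr b => t b
  | _, _ => i != neg_coordinate z
  end.

Lemma sign_neg_coordinate z : sign z (neg_coordinate z) = false.
Proof. by case: z => [t|j] //=; rewrite eqxx. Qed.

Lemma sign_fixed z c : sign z (inl c) = (inl c != neg_coordinate z).
Proof. by case: z. Qed.

Lemma sign_surj z s : exists i, sign z i = s.
Proof.
case: s; last by exists (neg_coordinate z); rewrite sign_neg_coordinate.
have [c] : exists c : 'I_3, inl c \notin [:: neg_coordinate z].
  by apply: exists_notin_image; [apply: inl_inj | rewrite card_ord].
by rewrite inE => c_ok; exists (inl c); rewrite sign_fixed.
Qed.

Lemma sign_common z z' : exists i, sign z i && sign z' i.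
Proof.
have [c] : exists c : 'I_3, inl c \notin [:: neg_coordinate z; neg_coordinate z'].
  by apply: exists_notin_image; [apply: inl_inj | rewrite card_ord].
by rewrite !inE negb_or => c_ok; exists (inl c); rewrite !sign_fixed.
Qed.

Lemma sign_separates_codes (t t' : {ffun 'I_k -> bool}) :
  t != t' -> exists i, sign (inl t) i != sign (inl t') i.
Proof.
move=> tt'; have [b tb] : exists b, t b != t' b.
  by apply/existsP; apply: contraNT tt' => /existsPn eq_tt'; apply/eqP/ffunP => b; apply/eqP/negPn.
by exists (inr b).
Qed.

Inductive pattern_vertex := PX of coordinate & bool | PY of bool | PZ of signature.

Definition pattern_code (p : pattern_vertex) : coordinate * bool + (bool + signature) :=
  match p with PX i s => inl (i, s) | PY s => inr (inl s) | PZ z => inr (inr z) end.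

Definition pattern_decode (c : coordinate * bool + (bool + signature)) : pattern_vertex :=
  match c with inl (i, s) => PX i s | inr (inl s) => PY s | inr (inr z) => PZ z end.

Lemma pattern_codeK : cancel pattern_code pattern_decode.
Proof. by case. Qed.

Lemma pattern_decodeK : cancel pattern_decode pattern_code.
Proof. by case=> [[]|[]]. Qed.

HB.instance Definition _ := Finite.copy pattern_vertex (can_type pattern_codeK).

Definition pattern_adj (p q : pattern_vertex) : bool :=
  match p, q with
  | PX i s, PX j t => (i == j) && (s != t)
  | PX _ s, PY t | PY t, PX _ s => s == t
  | PX i s, PZ z | PZ z, PX i s => sign z i == s
  | PY s, PY t => s != t
  | _, _ => false
  end.

Lemma sgraph_pattern : sgraph pattern_adj.
Proof.
split=> [[i s|s|z] [j t|t|z']|[i s|s|z]] //=; rewrite ?eqxx ?andbF //.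
- by rewrite eq_sym (eq_sym s).
- by rewrite eq_sym.
Qed.

Lemma pattern_triangle_free p q o :
  pattern_adj p q -> pattern_adj q o -> pattern_adj p o -> False.
Proof.
case: p => [i s|s|z]; case: q => [j t|t|z']; case: o => [l u|u|z''] //=.
all: do ![move=> /andP[/eqP ? ?] | move=> /eqP ? | move=> ?]; subst.
all: repeat match goal with H : context [sign ?z ?i] |- _ => destruct (sign z i) end.
all: repeat match goal with b : bool |- _ => destruct b end; by [].
Qed.

Lemma pattern_code_edge (t t' : {ffun 'I_k -> bool}) : t != t' ->
  exists a b, [/\ pattern_adj a b, pattern_adj (PZ (inl t)) a & pattern_adj (PZ (inl t')) b].
Proof.
case/sign_separates_codes => i ti.
by exists (PX i (sign (inl t) i)), (PX i (sign (inl t') i)); rewrite /= !eqxx.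
Qed.

Definition pattern_weight (p : pattern_vertex) : nat :=
  match p with
  | PX _ _ | PZ (inr _) => 2 ^ k
  | PY _ => (k + 3) * 2 ^ k
  | PZ (inl _) => 1
  end.

Definition pattern_mass := ((5 * (k + 3)).+1 * 2 ^ k)%N.

Lemma sum_pattern_weight : (\sum_p pattern_weight p)%N = pattern_mass.
Proof.
rewrite (reindex pattern_decode); last first.
  by exists pattern_code => c _; rewrite ?pattern_codeK ?pattern_decodeK.
rewrite !big_sumType (eq_bigr (fun=> 2 ^ k)) /=; last by case.
rewrite !sum_nat_const card_prod card_sum card_ffun !card_bool !card_ord.
rewrite /pattern_mass; lia.
Qed.

Lemma pattern_common_nbhd p q : ~~ pattern_adj p q ->
  exists2 z, pattern_adj p z && pattern_adj q z & (2 ^ k <= pattern_weight z)%N.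
Proof.
pose rank p := match p with PX _ _ => 0 | PY _ => 1 | PZ _ => 2 end.
wlog rank_pq : p q / (rank p <= rank q)%N.
  move=> wlog_pq pq; have [/wlog_pq|/ltnW /wlog_pq qp] := leqP (rank p) (rank q); first exact.
  by have [|z ?] := qp; [rewrite (sgraph_pattern.1 q) | exists z; rewrite // andbC].
have heavy_Y : (2 ^ k <= (k + 3) * 2 ^ k)%N by rewrite leq_pmull ?addn3.
case: p rank_pq => [i s|s|z]; case: q => [j t|t|z'] //= _ pq.
- have [<-|st] := eqVneq s t; first by exists (PY s); rewrite /= ?eqxx.
  have ij : i != j by move: pq; rewrite st andbT.
  move: st {pq}; case: s; case: t => // _.
  + by exists (PZ (inr j)); rewrite /= ?eqxx ?ij.
  + by exists (PZ (inr i)); rewrite /= ?eqxx // (eq_sym j) ij.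
- by exists (PY s); rewrite /= ?eqxx // eq_sym.
- by exists (PX i (sign z' i)); rewrite /= ?eqxx ?andbT // eq_sym.
- by move/negPn: pq => /eqP <-; exists (PX (inl ord0) s); rewrite /= ?eqxx.
- by have [i z'i] := sign_surj z' s; exists (PX i s); rewrite /= ?z'i ?eqxx.
- by have [i /andP[zi z'i]] := sign_common z z'; exists (PX i true); rewrite /= ?zi ?z'i.
Qed.

End Pattern.

Arguments PX {k}.
Arguments PY {k}.
Arguments PZ {k}.

Section Witness.
Variables k m : nat.

Definition witness_weight : pattern_vertex k + 'I_m -> nat :=
  join_weight (@pattern_weight k) (pattern_mass k).

Definition witness_order := size (blowup_seq witness_weight).

Definition witness_graph : rel 'I_witness_order :=
  relpre (blowup_label witness_weight) (join_clique (@pattern_adj k) m).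

Lemma witness_orderE : witness_order = (m.+1 * pattern_mass k)%N.
Proof.
rewrite /witness_order size_blowup_seq big_sumType /= sum_pattern_weight.
by rewrite sum_nat_const card_ord mulSn.
Qed.

Lemma sgraph_witness : sgraph witness_graph.
Proof. exact/sgraph_relpre/sgraph_join_clique/sgraph_pattern. Qed.

Lemma Kfree_witness : Kfree m.+3 witness_graph.
Proof.
apply: Kfree_relpre => [|L]; first exact: (sgraph_join_clique _ (sgraph_pattern k)).2.
rewrite -addn3 addnC; apply: card_join_clique_lt => B.
exact/clique_card_lt3/pattern_triangle_free.
Qed.

Lemma witness_codegree u v : (3 <= k)%N -> ~~ witness_graph u v ->
  (2 ^ k * pattern_mass k ^ m <=
     num_cliques witness_graph (common_nbhd witness_graph u v) m.+1)%N.
Proof.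
move=> k3 uv.
have heavy_Y : (2 ^ k * pattern_mass k <= (k + 3) * 2 ^ k * ((k + 3) * 2 ^ k))%N.
  by rewrite /pattern_mass; nia.
have Y_edge : pattern_adj (@PY k true) (PY false) by [].
have [L [cL L_nbhd <- heavy_L]] :=
  join_clique_codegree (sgraph_pattern k) Y_edge heavy_Y (@pattern_common_nbhd k) uv.
apply: leq_trans heavy_L _.
rewrite (eq_bigr (fun p => #|[set v | blowup_label witness_weight v == p]|)); last first.
  by move=> p _; rewrite card_blowup_fibre.
apply: prod_card_fibres_le_num_cliques => // x /(subsetP L_nbhd).
by rewrite !inE.
Qed.

Lemma witness_weight_gt0 p : (0 < witness_weight p)%N.
Proof. by case: p => [[i s|s|[t|j]]|j]; rewrite /= /pattern_mass ?muln_gt0 ?expn_gt0 ?addn3. Qed.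

Lemma witness_hom_card (F : finType) (f : rel F) (phi : 'I_witness_order -> F) :
  sgraph f -> Kfree m.+3 f -> is_hom witness_graph f phi -> (2 ^ k <= #|F|)%N.
Proof.
move=> f_sgraph f_free phi_hom.
have [sec secK] := blowup_label_section witness_weight_gt0.
have psi_hom := is_hom_relpre_section secK phi_hom.
have code_image_inj : injective (fun t => phi (sec (inl (PZ (inl t))))).
  move=> t t'; apply: contra_eq => /pattern_code_edge[a [b [ab ta t'b]]].
  exact: join_hom_separates (sgraph_pattern k) f_sgraph f_free psi_hom ab ta t'b.
by have := leq_card _ code_image_inj; rewrite card_ffun card_bool card_ord.
Qed.

End Witness.

Arguments witness_graph : clear implicits.

Lemma nine_mul_exp_le r : (3 <= r)%N -> (9 * (r - 2) ^ (r - 2) <= r ^ r)%N.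
Proof.
move=> r3; have -> : (r ^ r = r ^ 2 * r ^ (r - 2))%N by rewrite -expnD subnKC // ltnW.
apply: leq_mul; first by rewrite -[9%N]/(3 ^ 2)%N leq_exp2r.
by rewrite leq_exp2r ?leq_subr // subn_gt0.
Qed.

Local Open Scope ring_scope.

Lemma powR2_le_expn (R : realType) (x : R) (n : nat) : x <= n%:R -> 2 `^ x <= (2 ^ n)%:R.
Proof. by move=> x_le; rewrite natrX -powR_mulrn // ler_powR ?ler1n. Qed.

Lemma witness_density (R : realFieldType) (r k : nat) (eps : R) :
  (3 <= r)%N -> 0 < eps -> 1 < (8 * (r ^ r)%:R * eps)^-1 ->
  k%:R <= (8 * (r ^ r)%:R * eps)^-1 + 3 ->
  eps * (witness_order k (r - 3))%:R ^+ (r - 2) <= (2 ^ k * pattern_mass k ^ (r - 3))%:R.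
Proof.
move=> r3 eps_gt0; set a := (8 * _ * eps)^-1 => a_gt1 k_le.
set m := (r - 3)%N; set c := (5 * (k + 3)).+1.
have -> : (r - 2 = m.+1)%N by rewrite /m; lia.
rewrite witness_orderE -natrX.
have -> : ((m.+1 * pattern_mass k) ^ m.+1 = (m.+1 ^ m.+1 * c) * (2 ^ k * pattern_mass k ^ m))%N.
  by rewrite expnMn (expnS (pattern_mass k)) {1}/pattern_mass -/c !mulnA.
rewrite natrM mulrA ler_piMl // natrM.
have nine_le : 9 * (m.+1 ^ m.+1)%:R <= (r ^ r)%:R :> R.
  by rewrite -natrM ler_nat (_ : m.+1 = r - 2)%N ?nine_mul_exp_le //; lia.
(* 9 (r-2)^(r-2) <= r^r and c <= 36 a give eps (r-2)^(r-2) c <= 1/2. *)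
have c_le : c%:R <= 36 * a by rewrite /c -addn1 natrD natrM natrD; lra.
have eps_a : 8 * (r ^ r)%:R * eps * a = 1.
  by rewrite /a mulfV // gt_eqF // !mulr_gt0 // ltr0n expn_gt0 (leq_trans _ r3).
have : 0 <= eps * (m.+1 ^ m.+1)%:R * (36 * a - c%:R) by rewrite !mulr_ge0 ?subr_ge0 // ltW.
have : 0 <= eps * a * ((r ^ r)%:R - 9 * (m.+1 ^ m.+1)%:R).
  by rewrite !mulr_ge0 ?subr_ge0 // ltW // (lt_trans ltr01 a_gt1).
nra.
Qed.

Theorem theorem1p7 (R : realType) (r : nat) (eps : R) :
  (3 <= r)%N -> 0 < eps ->
  exists n : nat, (0 < n)%N /\
  exists e : rel 'I_n,
    [/\ sgraph e, Kfree r e,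
        (forall u v : 'I_n, u != v -> ~~ e u v ->
           eps * (n%:R ^+ (r - 2)) <= (num_cliques e (common_nbhd e u v) (r - 2))%:R)
      & (forall (F : finType) (f : rel F) (phi : 'I_n -> F),
           sgraph f -> Kfree r f -> is_hom e f phi ->
           (2 : R) `^ ((8 * (r ^ r)%:R * eps)^-1) <= (#|F|)%:R)].
Proof.
move=> r3 eps_gt0; set a := (8 * _ * eps)^-1.
have [a_le1 | a_gt1] := lerP a 1.
  exists 2; split=> //; exists (fun u v => u != v).
  split=> [||u v -> //|F f phi f_sgraph _ phi_hom].
  - by split=> [u v|u]; rewrite ?eqxx // eq_sym.
  - exact: Kfree_complete.
  apply: le_trans (powR2_le_expn (n := 1) a_le1) _.
  by rewrite ler_nat (card_ge2_of_hom f_sgraph phi_hom (isT : ord0 != ord_max :> 'I_2)).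
set k := (Num.truncn a + 3)%N; set m := (r - 3)%N.
have r_eq : r = m.+3 by rewrite /m; lia.
exists (witness_order k m); split; first by rewrite witness_orderE /pattern_mass !muln_gt0 expn_gt0.
exists (witness_graph k m); split.
- exact: sgraph_witness.
- by rewrite r_eq; apply: Kfree_witness.
- move=> u v _ uv; apply: le_trans (witness_density r3 eps_gt0 a_gt1 _) _.
    by rewrite natrD lerD2r truncn_le ltW // (lt_trans ltr01 a_gt1).
  by rewrite ler_nat (_ : r - 2 = m.+1)%N ?witness_codegree //; lia.
- move=> F f phi f_sgraph f_free phi_hom.
  apply: le_trans (powR2_le_expn (n := k) (ltW (lt_le_trans (truncnS_gt a) _))) _.
    by rewrite ler_nat /k -addn1 leq_add2l.
  by rewrite ler_nat (witness_hom_card f_sgraph _ phi_hom) // -r_eq.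
Qed.
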